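(* Let $p$ be prime, let $c_1,\dots,c_k$ be positive integers, and let $v\ge2$ be an integer coprime to $p$. Given any interval $\tilde J\subset[0,1]$ and any $\varepsilon>0$, there exists a $v$-adic interval $I\subset\tilde J$ such that for every $i\in\{1,\dots,k\}$, letting $J^i$ be the smallest $pc_i$-adic interval containing $I$, there is a point $\zeta(J^i)$ which is an interior endpoint of one of the $pc_i$-adic children of $J^i$ (i.e. an endpoint of a child lying in the interior of $J^i$) satisfying $$0<\zeta(J^i)-Z(I)\le\varepsilon|I|.$$
   Context: For a positive integer $N$, the $N$-adic intervals are $[\frac{k-1}{N^s},\frac{k}{N^s})$, $s,k\in\mathbb{Z}$, with $N$-adic children the $N$ equal-length subintervals $[\frac{k-1}{N^s}+\frac{j-1}{N^{s+1}},\frac{k-1}{N^s}+\frac{j}{N^{s+1}})$, $1\le j\le N$. For a $v$-adic interval $I=[\frac{k-1}{v^s},\frac{k}{v^s})$, $Z(I)=\frac{k-1}{v^s}+\frac{v-1}{v^{s+1}}$ is the left endpoint of its last $v$-adic child. $|I|$ is the length of $I$. *)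

From Stdlib Require Import Reals ZArith Znumtheory Lra Lia.
Open Scope R_scope.

Definition adic_left (N s k : Z) : R := IZR (k - 1) / powerRZ (IZR N) s.
Definition adic_right (N s k : Z) : R := IZR k / powerRZ (IZR N) s.

Definition in_adic (N s k : Z) (x : R) : Prop :=
  adic_left N s k <= x < adic_right N s k.

Definition adic_subset (N s k s' k' : Z) : Prop :=
  forall x, in_adic N s k x -> in_adic N s' k' x.

Definition smallest_adic_containing (N s' k' v s k : Z) : Prop :=
  (forall x, in_adic v s k x -> in_adic N s' k' x) /\
  (forall s'' k'', (forall x, in_adic v s k x -> in_adic N s'' k'' x) ->
     adic_subset N s' k' s'' k'').

Definition child_left (N s k j : Z) : R :=
  adic_left N s k + IZR (j - 1) / powerRZ (IZR N) (s + 1).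
Definition child_right (N s k j : Z) : R :=
  adic_left N s k + IZR j / powerRZ (IZR N) (s + 1).

Definition interior_child_endpoint (N s k : Z) (zeta : R) : Prop :=
  (exists j : Z, (1 <= j <= N)%Z /\
     (zeta = child_left N s k j \/ zeta = child_right N s k j)) /\
  adic_left N s k < zeta < adic_right N s k.

(* Z(I) for the v-adic interval I = (s,k): left endpoint of its last child. *)
Definition Zpt (v s k : Z) : R :=
  adic_left v s k + IZR (v - 1) / powerRZ (IZR v) (s + 1).

Definition adic_len (v s k : Z) : R := adic_right v s k - adic_left v s k.

Definition is_interval_in_01 (J : R -> Prop) : Prop :=
  (forall x, J x -> 0 <= x <= 1) /\
  (forall x y z, J x -> J z -> x <= y <= z -> J y) /\
  (exists x y, J x /\ J y /\ x < y).

From Stdlib Require Import Reals ZArith Znumtheory Zpow_facts Lra Lia Classical.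
From mathcomp Require ssreflect ssrfun ssrbool eqtype ssrnat div prime cyclic zify.

(* Fix a v-adic interval I0 inside J and a point z = m / p^t lying to the right of Z(I0)
   by less than eps |I0|.  As v is coprime to p, v^E = 1 mod p^t for arbitrarily large E,
   and passing from level s to level s + E keeps z at the same relative position in its
   v-adic interval I while making I as small as we like.  For N = p c_i, z is N-adic of some
   exact level n + 1 <= t.  The N-adic interval of level n containing z then contains the
   tiny interval I, no finer N-adic interval does (z is an N-adic endpoint strictly inside
   I), and z is an interior endpoint of one of its children. *)

Module Euler.
Import ssreflect ssrfun ssrbool eqtype ssrnat div prime cyclic zify.
Lemma exists_large_pow_cong1 (v q B : Z) :
  (2 <= v)%Z -> (0 < q)%Z -> rel_prime v q ->
  exists E, (0 <= E)%Z /\ (B <= v ^ E)%Z /\ (q | v ^ E - 1)%Z.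
Proof.
move=> v2 q0 /Zgcd_1_rel_prime vq.
have co : coprime (Z.to_nat v) (Z.to_nat q).
  apply/eqP/Nat2Z.inj.
  by rewrite zify_ssreflect.SsreflectZifyInstances.Op_gcdn_subproof !Z2Nat.id //; lia.
pose E := (totient (Z.to_nat q) * Z.to_nat B)%N.
have : Z.to_nat v ^ E = 1 %[mod Z.to_nat q].
  by rewrite expnM -modnXm Euler_exp_totient // modnXm exp1n.
move/eqP; rewrite eqn_mod_dvd ?expn_gt0; last lia.
case/dvdnP => d Hd.
exists (Z.of_nat E); split; first lia.
split.
- have BE : (Z.to_nat B <= E)%N by rewrite leq_pmull // totient_gt0; lia.
  have := Z.pow_gt_lin_r v (Z.of_nat (Z.to_nat B)) ltac:(lia) ltac:(lia).
  have := Z.pow_le_mono_r v _ _ ltac:(lia) (inj_le _ _ (ssrnat.leP BE)).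
  lia.
- exists (Z.of_nat d). have := f_equal Z.of_nat Hd.
  rewrite -[X in X ^ _ - 1](Z2Nat.id v); last lia.
  rewrite -zify_ssreflect.SsreflectZifyInstances.Op_expn_subproof.
  have : (0 < Z.to_nat v ^ E)%N by rewrite expn_gt0; lia.
  lia.
Qed.
End Euler.

Open Scope R_scope.

Definition on_grid (Q x : R) : Prop := exists m : Z, x * Q = IZR m.

Lemma on_grid_mulr (Q x : R) (n : Z) : on_grid Q x -> on_grid (Q * IZR n) x.
Proof. intros [m Hm]. exists (m * n)%Z. rewrite mult_IZR, <- Hm. ring. Qed.

Lemma on_grid_mull (Q x : R) (n : Z) : on_grid Q x -> on_grid (IZR n * Q) x.
Proof. rewrite Rmult_comm. apply on_grid_mulr. Qed.

Lemma on_grid_gap (Q a b : R) :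
  0 < Q -> on_grid Q a -> on_grid Q b -> a < b -> / Q <= b - a.
Proof.
  intros HQ [m Hm] [n Hn] Hab.
  assert (Hmn : (m < n)%Z) by (apply lt_IZR; rewrite <- Hm, <- Hn; nra).
  assert (H1 : 1 <= IZR n - IZR m) by (rewrite <- minus_IZR; apply IZR_le; lia).
  apply (Rmult_le_reg_r Q); [lra|]. rewrite Rinv_l by lra. nra.
Qed.

Lemma powerRZ_IZR_nonneg (N e : Z) : (0 <= e)%Z -> powerRZ (IZR N) e = IZR (N ^ e).
Proof.
  intros He. rewrite <- (Z2Nat.id e) at 1 by lia.
  rewrite <- pow_powerRZ, pow_IZR, Z2Nat.id by lia. reflexivity.
Qed.

Lemma exists_pow_ge (N : Z) (B : R) : (2 <= N)%Z -> exists e, (0 <= e)%Z /\ B <= IZR (N ^ e).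
Proof.
  intros HN. set (e := Z.max 0 (up B)). exists e. split; [lia|].
  destruct (archimed B) as [HB _].
  assert (He : (e < N ^ e)%Z) by (apply Z.pow_gt_lin_r; lia).
  apply IZR_lt in He. assert (IZR (up B) <= IZR e) by (apply IZR_le; lia). lra.
Qed.

Section Adic.

Variable N : Z.
Hypothesis N_pos : (0 < N)%Z.

Let NR_pos : 0 < IZR N.
Proof. apply IZR_lt; lia. Qed.

Lemma powerRZ_IZR_pos (s : Z) : 0 < powerRZ (IZR N) s.
Proof. apply powerRZ_lt, NR_pos. Qed.

Lemma powerRZ_IZR_add (s e : Z) :
  (0 <= e)%Z -> powerRZ (IZR N) (s + e) = powerRZ (IZR N) s * IZR (N ^ e).
Proof.
  intros He. pose proof NR_pos.
  rewrite powerRZ_add, (powerRZ_IZR_nonneg N e) by lra || lia. reflexivity.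
Qed.

Lemma in_adic_iff (s k : Z) (x : R) :
  in_adic N s k x <-> IZR (k - 1) <= x * powerRZ (IZR N) s < IZR k.
Proof.
  pose proof (powerRZ_IZR_pos s) as HW.
  unfold in_adic, adic_left, adic_right.
  set (W := powerRZ (IZR N) s) in *.
  replace (IZR (k - 1)) with (IZR (k - 1) / W * W) at 2 by (field; lra).
  replace (IZR k) with (IZR k / W * W) at 2 by (field; lra).
  split; intros [H1 H2]; split; nra.
Qed.

Lemma on_grid_adic_left (s k : Z) : on_grid (powerRZ (IZR N) s) (adic_left N s k).
Proof.
  pose proof (powerRZ_IZR_pos s). exists (k - 1)%Z. unfold adic_left. field. lra.
Qed.

Lemma on_grid_adic_right (s k : Z) : on_grid (powerRZ (IZR N) s) (adic_right N s k).
Proof.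
  pose proof (powerRZ_IZR_pos s). exists k. unfold adic_right. field. lra.
Qed.

Lemma on_grid_le (s s' : Z) (z : R) :
  (s <= s')%Z -> on_grid (powerRZ (IZR N) s) z -> on_grid (powerRZ (IZR N) s') z.
Proof.
  intros Hs Hz. replace s' with (s + (s' - s))%Z by ring.
  rewrite powerRZ_IZR_add by lia. apply on_grid_mulr, Hz.
Qed.

Lemma adic_len_eq (s k : Z) : adic_len N s k = / powerRZ (IZR N) s.
Proof.
  pose proof (powerRZ_IZR_pos s). unfold adic_len, adic_right, adic_left.
  rewrite minus_IZR. field. lra.
Qed.

Lemma adic_len_pos (s k : Z) : 0 < adic_len N s k.
Proof. rewrite adic_len_eq. apply Rinv_0_lt_compat, powerRZ_IZR_pos. Qed.

Lemma in_adic_up (s : Z) (x : R) : in_adic N s (up (x * powerRZ (IZR N) s)) x.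
Proof.
  apply in_adic_iff. destruct (archimed (x * powerRZ (IZR N) s)).
  rewrite minus_IZR. lra.
Qed.

Lemma in_adic_adic_left (s k : Z) : in_adic N s k (adic_left N s k).
Proof.
  pose proof (powerRZ_IZR_pos s). unfold in_adic, adic_left, adic_right.
  rewrite minus_IZR. split; [lra|].
  apply Rmult_lt_compat_r; [apply Rinv_0_lt_compat; lra | lra].
Qed.

Lemma in_adic_dist (s k : Z) (x y : R) :
  in_adic N s k x -> in_adic N s k y -> Rabs (x - y) < / powerRZ (IZR N) s.
Proof.
  intros Hx Hy. rewrite <- (adic_len_eq s k).
  unfold in_adic, adic_len in *. apply Rabs_def1; lra.
Qed.

Lemma adic_left_of_on_grid (s k : Z) (z : R) :
  in_adic N s k z -> on_grid (powerRZ (IZR N) s) z -> adic_left N s k = z.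
Proof.
  pose proof (powerRZ_IZR_pos s).
  intros Hz [m Hm]. apply in_adic_iff in Hz. rewrite Hm in Hz. destruct Hz as [H1 H2].
  apply le_IZR in H1. apply lt_IZR in H2.
  unfold adic_left. replace (k - 1)%Z with m by lia.
  rewrite <- Hm. field. lra.
Qed.

Lemma adic_nested (s k s' k' : Z) (x : R) :
  (s <= s')%Z -> in_adic N s' k' x -> in_adic N s k x -> adic_subset N s' k' s k.
Proof.
  intros Hs Hx' Hx y Hy.
  set (e := (s' - s)%Z).
  assert (He : powerRZ (IZR N) s' = powerRZ (IZR N) s * IZR (N ^ e)).
  { unfold e. rewrite <- powerRZ_IZR_add by lia. f_equal. ring. }
  assert (Hq : (0 < N ^ e)%Z) by (apply Z.pow_pos_nonneg; unfold e; lia).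
  apply IZR_lt in Hq.
  apply in_adic_iff in Hx, Hx', Hy. apply in_adic_iff.
  rewrite He, <- Rmult_assoc in Hx', Hy.
  set (a := x * powerRZ (IZR N) s) in *.
  set (b := y * powerRZ (IZR N) s) in *.
  set (q := IZR (N ^ e)) in *.
  assert (Hl : ((k - 1) * N ^ e < k')%Z).
  { apply lt_IZR. rewrite mult_IZR. fold q. nra. }
  assert (Hr : (k' - 1 < k * N ^ e)%Z).
  { apply lt_IZR. rewrite mult_IZR. fold q. nra. }
  assert (Hl' : IZR (k - 1) * q <= IZR (k' - 1)).
  { unfold q. rewrite <- mult_IZR. apply IZR_le. lia. }
  assert (Hr' : IZR k' <= IZR k * q).
  { unfold q. rewrite <- mult_IZR. apply IZR_le. lia. }
  split; nra.
Qed.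

Lemma adic_left_lt_of_not_on_grid (s k : Z) (z : R) :
  in_adic N s k z -> ~ on_grid (powerRZ (IZR N) s) z -> adic_left N s k < z.
Proof.
  intros [Hz _] Hoff. destruct (Rle_lt_or_eq_dec _ _ Hz) as [Hlt|Heq]; [exact Hlt|].
  exfalso. apply Hoff. rewrite <- Heq. apply on_grid_adic_left.
Qed.

Lemma interior_child_endpoint_of_on_grid (s k : Z) (z : R) :
  in_adic N s k z -> ~ on_grid (powerRZ (IZR N) s) z ->
  on_grid (powerRZ (IZR N) (s + 1)) z -> interior_child_endpoint N s k z.
Proof.
  intros Hz Hoff [z1 Hz1].
  pose proof NR_pos. pose proof (powerRZ_IZR_pos s) as HW.
  set (W := powerRZ (IZR N) s) in *.
  assert (HW1 : powerRZ (IZR N) (s + 1) = W * IZR N).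
  { rewrite powerRZ_IZR_add, Z.pow_1_r by lia. reflexivity. }
  rewrite HW1 in Hz1.
  pose proof (adic_left_lt_of_not_on_grid s k z Hz Hoff) as Hleft.
  assert (Hscaled : IZR (k - 1) < z * W < IZR k).
  { apply in_adic_iff in Hz as [_ Hz2]. split; [|exact Hz2].
    assert (adic_left N s k * W = IZR (k - 1)) by (unfold adic_left; fold W; field; lra). nra. }
  assert (Hz1l : ((k - 1) * N < z1)%Z).
  { apply lt_IZR. rewrite mult_IZR, <- Hz1. nra. }
  assert (Hz1r : (z1 < k * N)%Z).
  { apply lt_IZR. rewrite mult_IZR, <- Hz1. nra. }
  split.
  - exists (z1 - (k - 1) * N)%Z. split; [lia|]. right.
    unfold child_right, adic_left. rewrite HW1. fold W.
    rewrite (minus_IZR z1), mult_IZR, <- Hz1, minus_IZR. field. lra.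
  - split; [exact Hleft | apply Hz].
Qed.

(* By [on_grid_gap], [z] is at distance at least [/ Q] from both endpoints. *)
Lemma in_adic_of_near (Q : R) (s k : Z) (z x : R) :
  0 < Q -> on_grid Q z -> on_grid Q (adic_left N s k) -> on_grid Q (adic_right N s k) ->
  adic_left N s k < z -> in_adic N s k z -> Rabs (x - z) < / Q -> in_adic N s k x.
Proof.
  intros HQ Hz Hl Hr Hlz [_ Hzr] Hx. apply Rabs_def2 in Hx.
  pose proof (on_grid_gap Q _ _ HQ Hl Hz Hlz).
  pose proof (on_grid_gap Q _ _ HQ Hz Hr Hzr).
  split; lra.
Qed.

End Adic.

Lemma smallest_adic_containing_of_on_grid (N v s0 k0 n k : Z) (z : R) :
  (0 < N)%Z -> (0 < v)%Z ->
  (forall x, in_adic v s0 k0 x -> in_adic N n k x) ->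
  in_adic v s0 k0 z -> adic_left v s0 k0 < z ->
  on_grid (powerRZ (IZR N) (n + 1)) z -> smallest_adic_containing N n k v s0 k0.
Proof.
  intros HN Hv Hsub Hz Hlz Hgrid. split; [exact Hsub|].
  intros s'' k'' Hsub''.
  destruct (Z_le_gt_dec s'' n) as [Hle|Hgt].
  - exact (adic_nested N HN s'' k'' n k z Hle (Hsub z Hz) (Hsub'' z Hz)).
  - exfalso.
    assert (Hleft : adic_left N s'' k'' = z).
    { apply (adic_left_of_on_grid N HN); [exact (Hsub'' z Hz)|].
      apply (on_grid_le N HN (n + 1)); [lia | exact Hgrid]. }
    destruct (Hsub'' _ (in_adic_adic_left v Hv s0 k0)) as [H _]. lra.
Qed.

Lemma exists_transition (P : Z -> Prop) (t : Z) :
  (0 <= t)%Z -> ~ P 0%Z -> P t -> exists n, (0 <= n < t)%Z /\ ~ P n /\ P (n + 1)%Z.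
Proof.
  intros Ht. pattern t. apply natlike_ind; [| |exact Ht]; clear t Ht.
  - intros H0 H0'. contradiction.
  - intros t Ht IH H0 Ht1. destruct (classic (P t)) as [Hp|Hp].
    + destruct (IH H0 Hp) as [n [Hn Hpn]]. exists n. split; [lia | exact Hpn].
    + exists t. unfold Z.succ in Ht1. split; [lia|]. split; assumption.
Qed.

Lemma exists_smallest_adic_with_child_endpoint (N v s k q t : Z) (z : R) :
  (2 <= N)%Z -> (0 < v)%Z -> (0 < q)%Z -> (0 <= t)%Z ->
  on_grid (IZR q) z -> on_grid (powerRZ (IZR N) t) z -> ~ on_grid 1 z ->
  IZR (q * N ^ t) <= powerRZ (IZR v) s ->
  in_adic v s k z -> adic_left v s k < z ->
  exists s' k', smallest_adic_containing N s' k' v s k /\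
                interior_child_endpoint N s' k' z.
Proof.
  intros HN Hv Hq Ht Hzq HzN Hz1 Hsmall Hz Hlz.
  assert (HN0 : (0 < N)%Z) by lia.
  destruct (exists_transition (fun n => on_grid (powerRZ (IZR N) n) z) t Ht Hz1 HzN)
    as [n [Hn [Hoff Hon]]].
  set (k' := up (z * powerRZ (IZR N) n)).
  pose proof (in_adic_up N HN0 n z) as Hz'. fold k' in Hz'.
  exists n, k'. split; [|exact (interior_child_endpoint_of_on_grid N HN0 n k' z Hz' Hoff Hon)].
  apply (smallest_adic_containing_of_on_grid N v s k n k' z HN0 Hv);
    [|exact Hz | exact Hlz | exact Hon].
  set (Q := IZR q * IZR (N ^ n)).
  assert (HQ : 0 < Q).
  { unfold Q. rewrite <- mult_IZR. apply IZR_lt, Z.mul_pos_pos; [lia | apply Z.pow_pos_nonneg; lia]. }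
  assert (HQW : Q <= powerRZ (IZR v) s).
  { eapply Rle_trans; [|exact Hsmall]. unfold Q. rewrite <- mult_IZR. apply IZR_le.
    apply Z.mul_le_mono_nonneg_l; [lia|]. apply Z.pow_le_mono_r; lia. }
  assert (HgridN : forall y, on_grid (powerRZ (IZR N) n) y -> on_grid Q y).
  { intros y Hy. unfold Q. apply on_grid_mull. rewrite <- powerRZ_IZR_nonneg by lia. exact Hy. }
  intros x Hx.
  apply (in_adic_of_near N Q n k' z x HQ).
  - unfold Q. apply on_grid_mulr, Hzq.
  - apply HgridN, on_grid_adic_left; lia.
  - apply HgridN, on_grid_adic_right; lia.
  - exact (adic_left_lt_of_not_on_grid N HN0 n k' z Hz' Hoff).
  - exact Hz'.
  - eapply Rlt_le_trans; [exact (in_adic_dist v Hv s k x z Hx Hz)|].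
    apply Rinv_le_contravar; assumption.
Qed.

Lemma exists_adic_subset (N : Z) (J : R -> Prop) (x0 y0 : R) :
  (2 <= N)%Z -> (forall x y z, J x -> J z -> x <= y <= z -> J y) ->
  J x0 -> J y0 -> x0 < y0 ->
  exists s k, (0 <= s)%Z /\ forall x, in_adic N s k x -> J x.
Proof.
  intros HN Hconv Jx Jy Hxy.
  destruct (exists_pow_ge N (2 / (y0 - x0)) HN) as [s [Hs HW]].
  rewrite <- powerRZ_IZR_nonneg in HW by exact Hs.
  set (W := powerRZ (IZR N) s) in *.
  assert (HW2 : 2 <= (y0 - x0) * W).
  { apply (Rmult_le_compat_l (y0 - x0)) in HW; [|lra].
    replace ((y0 - x0) * (2 / (y0 - x0))) with 2 in HW by (field; lra). exact HW. }
  assert (HW0 : 0 < W) by apply (powerRZ_IZR_pos N ltac:(lia) s).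
  exists s, (up (x0 * W) + 1)%Z. split; [exact Hs|]. intros x Hx.
  apply (in_adic_iff N ltac:(lia)) in Hx. fold W in Hx.
  replace (up (x0 * W) + 1 - 1)%Z with (up (x0 * W)) in Hx by ring.
  rewrite plus_IZR in Hx. destruct (archimed (x0 * W)).
  apply (Hconv x0 x y0); [exact Jx | exact Jy | split; nra].
Qed.

Lemma exists_on_grid_between (q : Z) (a b : R) :
  (2 <= q)%Z -> a < b -> exists t, (0 <= t)%Z /\ exists z, on_grid (IZR (q ^ t)) z /\ a < z < b.
Proof.
  intros Hq Hab.
  destruct (exists_pow_ge q (2 / (b - a)) Hq) as [t [Ht HQ]].
  set (Q := IZR (q ^ t)) in *.
  assert (HQ2 : 2 <= (b - a) * Q).
  { apply (Rmult_le_compat_l (b - a)) in HQ; [|lra].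
    replace ((b - a) * (2 / (b - a))) with 2 in HQ by (field; lra). exact HQ. }
  assert (HQ0 : 0 < Q) by nra.
  set (m := up (a * Q)). destruct (archimed (a * Q)) as [Hm1 Hm2]. fold m in Hm1, Hm2.
  assert (Hz : IZR m / Q * Q = IZR m) by (field; lra).
  exists t. split; [exact Ht|]. exists (IZR m / Q). split; [exists m; exact Hz|].
  split; apply (Rmult_lt_reg_r Q); try rewrite Hz; nra.
Qed.

Lemma Zpt_eq (v s k : Z) : (0 < v)%Z ->
  Zpt v s k = adic_left v s k + (1 - / IZR v) * adic_len v s k.
Proof.
  intros Hv. assert (0 < IZR v) by (apply IZR_lt; lia).
  rewrite (adic_len_eq v Hv). unfold Zpt.
  rewrite (powerRZ_IZR_add v Hv s 1), Z.pow_1_r by lia. rewrite minus_IZR.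
  pose proof (powerRZ_IZR_pos v Hv s). field. lra.
Qed.

Lemma in_adic_of_near_Zpt (v s k : Z) (z eta : R) :
  (0 < v)%Z -> eta <= / IZR v -> 0 < z - Zpt v s k < eta * adic_len v s k ->
  in_adic v s k z /\ adic_left v s k < z.
Proof.
  intros Hv Heta Hz. rewrite (Zpt_eq v s k Hv) in Hz.
  pose proof (adic_len_pos v Hv s k).
  assert (Hinv : 0 < / IZR v <= 1).
  { assert (1 <= IZR v) by (apply IZR_le; lia).
    split; [apply Rinv_0_lt_compat; lra|]. rewrite <- Rinv_1. apply Rinv_le_contravar; lra. }
  unfold in_adic. unfold adic_len in *. nra.
Qed.

(* As [z * v^s * (v^E - 1)] is an integer, [z * v^(s+E)] and [z * v^s] have the same
   fractional part: [z] sits at the same relative position in its v-adic intervals of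
   levels [s] and [s + E]. *)
Lemma adic_refine_periodic (v s k E d : Z) (z : R) :
  (0 < v)%Z -> (0 <= E)%Z -> z * powerRZ (IZR v) s * (IZR (v ^ E) - 1) = IZR d ->
  in_adic v s k z ->
  in_adic v (s + E) (k + d) z /\
  z - Zpt v (s + E) (k + d) = (z - Zpt v s k) / IZR (v ^ E) /\
  adic_len v (s + E) (k + d) = adic_len v s k / IZR (v ^ E).
Proof.
  intros Hv HE Hd Hz.
  pose proof (powerRZ_IZR_pos v Hv s) as HW.
  assert (Hq : 0 < IZR (v ^ E)) by (apply IZR_lt, Z.pow_pos_nonneg; lia).
  assert (0 < IZR v) by (apply IZR_lt; lia).
  pose proof (powerRZ_IZR_add v Hv s E HE) as HWE.
  set (W := powerRZ (IZR v) s) in *. set (q := IZR (v ^ E)) in *.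
  assert (Hk : IZR (k + d - 1) = IZR (k - 1) + z * W * (q - 1)).
  { rewrite Hd, <- plus_IZR. f_equal. ring. }
  apply (in_adic_iff v Hv) in Hz. fold W in Hz.
  split; [|split].
  - apply (in_adic_iff v Hv). rewrite HWE, Hk, plus_IZR, <- Hd. lra.
  - rewrite !(Zpt_eq v _ _ Hv), !(adic_len_eq v Hv). unfold adic_left.
    rewrite HWE, Hk. fold W. field. lra.
  - rewrite !(adic_len_eq v Hv), HWE. fold W. field. lra.
Qed.

Lemma exists_periodic_refinement (v q s k B : Z) (z : R) :
  (2 <= v)%Z -> (0 < q)%Z -> rel_prime v q -> (0 <= s)%Z ->
  on_grid (IZR q) z -> in_adic v s k z ->
  exists E d, (0 <= E)%Z /\ (B <= v ^ E)%Z /\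
    in_adic v (s + E) (k + d) z /\
    z - Zpt v (s + E) (k + d) = (z - Zpt v s k) / IZR (v ^ E) /\
    adic_len v (s + E) (k + d) = adic_len v s k / IZR (v ^ E).
Proof.
  intros Hv Hq Hvq Hs [m Hm] Hz.
  destruct (Euler.exists_large_pow_cong1 v q B Hv Hq Hvq) as [E [HE [HB [d' Hd']]]].
  exists E, (m * v ^ s * d')%Z. split; [exact HE|]. split; [exact HB|].
  apply (adic_refine_periodic v s k E); [lia | exact HE | | exact Hz].
  rewrite powerRZ_IZR_nonneg by exact Hs.
  replace (IZR (v ^ E) - 1) with (IZR (d' * q)) by (rewrite <- Hd', minus_IZR; reflexivity).
  rewrite !mult_IZR, <- Hm. ring.
Qed.

Lemma exists_adic_interval_near_grid_point (v q : Z) (B : Z -> Z) (J : R -> Prop) (eta : R) :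
  (2 <= v)%Z -> (2 <= q)%Z -> rel_prime v q ->
  (forall x y z, J x -> J z -> x <= y <= z -> J y) -> (exists x y, J x /\ J y /\ x < y) ->
  0 < eta <= / IZR v ->
  exists s k t z, (0 <= t)%Z /\ (forall x, in_adic v s k x -> J x) /\
    on_grid (IZR (q ^ t)) z /\ ~ on_grid 1 z /\ IZR (B t) <= powerRZ (IZR v) s /\
    0 < z - Zpt v s k < eta * adic_len v s k.
Proof.
  intros Hv Hq Hvq Hconv [x0 [y0 [Jx [Jy Hxy]]]] Heta.
  assert (Hv0 : (0 < v)%Z) by lia.
  destruct (exists_adic_subset v J x0 y0 Hv Hconv Jx Jy Hxy) as [s0 [k0 [Hs0 HJ0]]].
  pose proof (adic_len_pos v Hv0 s0 k0).
  destruct (exists_on_grid_between q (Zpt v s0 k0) (Zpt v s0 k0 + eta * adic_len v s0 k0) Hq)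
    as [t [Ht [z [Hzq Hz]]]]; [nra|].
  destruct (in_adic_of_near_Zpt v s0 k0 z eta Hv0 (proj2 Heta) ltac:(lra)) as [Hz0 Hlz0].
  destruct (exists_periodic_refinement v (q ^ t) s0 k0 (B t) z Hv
              ltac:(apply Z.pow_pos_nonneg; lia) (rel_prime_Zpower_r t v q Ht Hvq) Hs0 Hzq Hz0)
    as [E [d [HE [HB [Hz1 [Hpos Hlen]]]]]].
  assert (HqE : 0 < IZR (v ^ E)) by (apply IZR_lt, Z.pow_pos_nonneg; lia).
  exists (s0 + E)%Z, (k0 + d)%Z, t, z. repeat split.
  - exact Ht.
  - intros x Hx. apply HJ0.
    exact (adic_nested v Hv0 s0 k0 (s0 + E) (k0 + d) z ltac:(lia) Hz1 Hz0 x Hx).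
  - exact Hzq.
  - intros Hgrid. apply (Rlt_irrefl z). rewrite <- (adic_left_of_on_grid v Hv0 s0 k0 z Hz0) at 1.
    + exact Hlz0.
    + exact (on_grid_le v Hv0 0 s0 z Hs0 Hgrid).
  - rewrite (powerRZ_IZR_add v Hv0 s0 E HE), powerRZ_IZR_nonneg by exact Hs0.
    rewrite <- mult_IZR. apply IZR_le.
    assert (0 < v ^ s0)%Z by (apply Z.pow_pos_nonneg; lia). nia.
  - rewrite Hpos. apply Rdiv_lt_0_compat; lra.
  - rewrite Hpos, Hlen. unfold Rdiv. rewrite <- Rmult_assoc.
    apply Rmult_lt_compat_r; [apply Rinv_0_lt_compat|]; lra.
Qed.

Lemma exists_upper_bound_range (kk : nat) (c : nat -> Z) :
  exists M, forall i, (1 <= i <= kk)%nat -> (c i <= M)%Z.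
Proof.
  induction kk as [|kk [M HM]].
  - exists 0%Z. intros i Hi. lia.
  - exists (Z.max M (c (S kk))). intros i Hi.
    destruct (Nat.eq_dec i (S kk)) as [->|Hne]; [lia|].
    specialize (HM i ltac:(lia)). lia.
Qed.

Theorem proposition2p6
  (p : Z) (hp : prime p)
  (kk : nat) (c : nat -> Z) (hc : forall i, (1 <= i <= kk)%nat -> (0 < c i)%Z)
  (v : Z) (hv : (2 <= v)%Z) (hvp : rel_prime v p)
  (J : R -> Prop) (hJ : is_interval_in_01 J)
  (eps : R) (heps : 0 < eps) :
  exists s k : Z,
    (forall x, in_adic v s k x -> J x) /\
    forall i, (1 <= i <= kk)%nat ->
      exists s' k' : Z,
        smallest_adic_containing (p * c i) s' k' v s k /\
        exists zeta : R,
          interior_child_endpoint (p * c i) s' k' zeta /\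
          0 < zeta - Zpt v s k <= eps * adic_len v s k.
Proof.
  destruct hJ as [_ [Hconv Hne]].
  assert (Hp : (2 <= p)%Z) by (apply prime_ge_2; exact hp).
  assert (Hv : (0 < v)%Z) by lia.
  set (eta := Rmin eps (/ IZR v)).
  assert (Heta : 0 < eta <= / IZR v).
  { split; [|apply Rmin_r]. apply Rmin_pos; [exact heps|]. apply Rinv_0_lt_compat, IZR_lt. lia. }
  destruct (exists_upper_bound_range kk c) as [M HM].
  destruct (exists_adic_interval_near_grid_point v p (fun t => p ^ t * (p * M) ^ t)%Z J eta
              hv Hp hvp Hconv Hne Heta) as [s [k [t [z [Ht [HJ [Hzq [Hz1 [HB Hwin]]]]]]]]].
  destruct (in_adic_of_near_Zpt v s k z eta Hv (proj2 Heta) Hwin) as [Hz Hlz].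
  exists s, k. split; [exact HJ|]. intros i Hi.
  pose proof (hc i Hi). pose proof (HM i Hi).
  destruct (exists_smallest_adic_with_child_endpoint (p * c i) v s k (p ^ t) t z)
    as [s' [k' [Hsmall Hend]]]; [nia | exact Hv | apply Z.pow_pos_nonneg; lia | exact Ht
    | exact Hzq | | exact Hz1 | | exact Hz | exact Hlz |].
  - rewrite powerRZ_IZR_nonneg, Z.pow_mul_l, mult_IZR by exact Ht. apply on_grid_mulr, Hzq.
  - eapply Rle_trans; [|exact HB]. apply IZR_le, Z.mul_le_mono_nonneg_l;
      [apply Z.pow_nonneg; lia | apply Z.pow_le_mono_l; nia].
  - exists s', k'. split; [exact Hsmall|]. exists z. split; [exact Hend|].
    pose proof (Rmin_l eps (/ IZR v)) as Heps. fold eta in Heps.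
    pose proof (adic_len_pos v Hv s k). nra.
Qed.
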